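(* There exists a $(201,9)$-arc in $\operatorname{PG}(2,27)$; hence $m_9(2,27)\ge 201$.
   Context: Points of $\operatorname{PG}(2,q)$ are the 1-dimensional subspaces of $\operatorname{GF}(q)^3$, lines are the 2-dimensional subspaces. An $(n,r)$-arc in $\operatorname{PG}(2,q)$ is a set $\mathcal B$ of $n$ points such that every line contains at most $r$ points of $\mathcal B$ and at least one line contains exactly $r$ points of $\mathcal B$. $m_r(2,q)$ is the maximum $n$ for which an $(n,r)$-arc in $\operatorname{PG}(2,q)$ exists. *)

From mathcomp Require Import all_boot all_order all_algebra.
Set Implicit Arguments. Unset Strict Implicit. Unset Printing Implicit Defensive.
Import GRing.Theory.
Local Open Scope ring_scope.

(* Subspaces of GF(q)^3 = 'rV[F]_3 are represented canonically by the 3x3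
   matrices A with <<A>>%MS = A (the canonical generator of their row space). *)

Definition subspace (F : fieldType) (A : 'M[F]_3) : bool := (<<A>>%MS == A).

Definition pg_point (F : fieldType) (A : 'M[F]_3) : bool :=
  subspace A && (\rank A == 1%N).

Definition pg_line (F : fieldType) (A : 'M[F]_3) : bool :=
  subspace A && (\rank A == 2%N).

Definition on_line (F : finFieldType) (B : {set 'M[F]_3}) (L : 'M[F]_3) : nat :=
  #|[set P in B | (P <= L)%MS]|.

Definition is_arc (F : finFieldType) (n r : nat) (B : {set 'M[F]_3}) : Prop :=
  [/\ {in B, forall P, pg_point P},
      #|B| = n,
      (forall L, pg_line L -> (on_line B L <= r)%N)
    & exists2 L, pg_line L & on_line B L = r].

Definition is_arcb (F : finFieldType) (r : nat) (B : {set 'M[F]_3}) : bool :=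
  [&& [forall P in B, pg_point P],
      [forall L, pg_line L ==> (on_line B L <= r)%N]
    & [exists L, pg_line L && (on_line B L == r)]].

(* m_r(2,q): maximum size of an (n,r)-arc (0 if there is none) *)
Definition m_r (F : finFieldType) (r : nat) : nat :=
  \max_(B : {set 'M[F]_3} | is_arcb r B) #|B|.

From HB Require Import structures.
From mathcomp Require Import all_boot all_order all_algebra all_field ring.
Set Implicit Arguments. Unset Strict Implicit. Unset Printing Implicit Defensive.
Import GRing.Theory.

(* Points and lines of PG(2,F) are described by normalized homogeneous
   coordinates (first nonzero coordinate equal to 1): a point <<v>> lies on
   the line with normal vector n iff v *m n^T = 0, and every line has exactly
   one normalized normal vector.  Consequently (arc_of_coordinates), a
   duplicate-free list S of normalized vectors spans an (|S|,r)-arc as soon as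
   every normalized n is orthogonal to at most r vectors of S, with equality
   for one n.  This reduces the theorem to a finite computation.

   That computation is carried out in an explicit model of GF(27), namely
   F_3[t]/(t^3 - t - 1), where the 201 points of the arc are checked against
   all normalized normal vectors by evaluation.  Any field F of order 27
   contains a root a of t^3 - t - 1 (exists_cubic_root), and t |-> a embeds
   the model isomorphically into F, transporting the computation to F. *)

Local Open Scope ring_scope.

Section NormalizedCoordinates.
Variables (F : fieldType) (m : nat).
Implicit Types v w : 'rV[F]_m.

Definition pivot_at v (k : 'I_m) : bool :=
  (v 0 k == 1) && [forall i : 'I_m, (i < k)%N ==> (v 0 i == 0)].

Definition normalized v : bool := [exists k, pivot_at v k].

Lemma normalized_neq0 v : normalized v -> v != 0.
Proof.
case/existsP=> k /andP[/eqP vk _]; apply/eqP=> v0.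
by move: vk; rewrite v0 mxE => /eqP; rewrite eq_sym oner_eq0.
Qed.

Lemma normalize v : v != 0 -> exists2 c : F, c != 0 & normalized (c *: v).
Proof.
move=> nz_v; have [i0 vi0] : exists i, v 0 i != 0.
  apply/existsP; apply: contraR nz_v => /existsPn v0.
  by apply/eqP/matrixP=> i j; rewrite ord1 mxE; apply/eqP/negbNE/v0.
case: (@arg_minnP _ i0 (fun i => v 0 i != 0) (@nat_of_ord m) vi0) => k vk k_min.
exists (v 0 k)^-1; first by rewrite invr_eq0.
apply/existsP; exists k; rewrite /pivot_at mxE mulVf // eqxx /=.
apply/forall_inP=> i lt_ik; rewrite mxE; apply/eqP.
by case: (eqVneq (v 0 i) 0) => [-> | /k_min]; [rewrite mulr0 | rewrite leqNgt lt_ik].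
Qed.

Lemma normalized_sub_eq v w : normalized v -> normalized w -> (v <= w)%MS -> v = w.
Proof.
case/existsP=> kv /andP[/eqP vkv /forall_inP v0].
case/existsP=> kw /andP[/eqP wkw /forall_inP w0].
case/sub_rVP=> c def_v; have vE i : v 0 i = c * w 0 i by rewrite def_v mxE.
have c_nz : c != 0.
  by apply/eqP=> c0; move/eqP: vkv; rewrite vE c0 mul0r eq_sym oner_eq0.
have [lt_vw | lt_wv | /val_inj eq_vw] := ltngtP kv kw.
- by move/eqP: vkv; rewrite vE (eqP (w0 _ lt_vw)) mulr0 eq_sym oner_eq0.
- by move: (v0 _ lt_wv); rewrite vE wkw mulr1 (negbTE c_nz).
- have c1 : c = 1 by rewrite -vkv vE eq_vw wkw mulr1.
  by rewrite def_v c1 scale1r.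
Qed.

End NormalizedCoordinates.
Arguments normalized {F m} v.

Lemma normalized3 (F : fieldType) (v : 'rV[F]_3) :
  normalized v = [|| v 0 0 == 1, (v 0 0 == 0) && (v 0 1 == 1)
                   | [&& v 0 0 == 0, v 0 1 == 0 & v 0 2%:R == 1]].
Proof.
apply/existsP/idP => [[k /andP[vk /forall_inP v0]] | ].
  have z0 : (0 < k)%N -> v 0 0 == 0 by exact: (v0 0).
  have z1 : (1 < k)%N -> v 0 1 == 0 by exact: (v0 1).
  case: k {v0} vk z0 z1 => [[|[|[|//]]] lt_k].
  - have -> : Ordinal lt_k = 0 by apply: val_inj.
    by move=> ->.
  - have -> : Ordinal lt_k = 1 by apply: val_inj.
    by move=> -> z0; rewrite z0 // orbT.
  - have -> : Ordinal lt_k = 2%:R by apply: val_inj.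
    by move=> -> z0 z1; rewrite z0 // z1 // !orbT.
case/or3P => [v0 | /andP[v0 v1] | /and3P[v0 v1 v2]].
- by exists 0; rewrite /pivot_at v0; apply/forall_inP.
- exists 1; rewrite /pivot_at v1; apply/forall_inP => -[[|//] lt_i] _.
  by have -> : Ordinal lt_i = 0 by apply: val_inj.
- exists 2%:R; rewrite /pivot_at v2; apply/forall_inP => -[[|[|//]] lt_i] _.
  + by have -> : Ordinal lt_i = 0 by apply: val_inj.
  + by have -> : Ordinal lt_i = 1 by apply: val_inj.
Qed.

Section PlaneEquations.
Variable F : fieldType.
Implicit Types v w n : 'rV[F]_3.

Lemma pg_point_gen v : v != 0 -> pg_point <<v>>%MS.
Proof. by move=> nz_v; rewrite /pg_point /subspace genmx_id genmxE rank_rV nz_v eqxx. Qed.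

Lemma sub_kermx_line n w : (w <= <<kermx n^T>>)%MS = (w *m n^T == 0).
Proof. by rewrite genmxE sub_kermx. Qed.

Lemma pg_line_kermx n : n != 0 -> pg_line <<kermx n^T>>%MS.
Proof.
move=> nz_n; rewrite /pg_line /subspace genmx_id genmxE mxrank_ker mxrank_tr.
by rewrite rank_rV nz_n eqxx.
Qed.

Lemma equationZ c n w : c != 0 -> (w *m (c *: n)^T == 0) = (w *m n^T == 0).
Proof. by move=> nz_c; rewrite linearZ /= -scalemxAr scaler_eq0 (negbTE nz_c). Qed.

(* Every line has a normalized normal vector: it is the kernel of a nonzero
   vector of its (one-dimensional) orthogonal complement. *)
Lemma line_equation L : pg_line L ->
  exists2 n, normalized n & forall w, (w <= L)%MS = (w *m n^T == 0).
Proof.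
case/andP=> _ /eqP rankL; set n0 := nz_row (kermx L^T).
have nz_n0 : n0 != 0.
  by rewrite nz_row_eq0 -mxrank_eq0 mxrank_ker mxrank_tr rankL.
have L_n0 : (L <= kermx n0^T)%MS.
  by rewrite sub_kermx -trmx_eq0 trmx_mul trmxK -sub_kermx nz_row_sub.
have eq_L : (L == kermx n0^T)%MS.
  by rewrite -(mxrank_leqif_eq L_n0).2 rankL mxrank_ker mxrank_tr rank_rV nz_n0.
have [c nz_c norm_n] := normalize nz_n0.
exists (c *: n0) => // w; rewrite equationZ // -sub_kermx.
by apply/idP/idP=> sub_w; apply: submx_trans sub_w _; case/andP: eq_L.
Qed.

End PlaneEquations.

Section ArcFromCoordinates.
Variables (F : finFieldType) (S : seq 'rV[F]_3).
Hypotheses (uniq_S : uniq S) (normal_S : all normalized S).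

Definition points_of : {set 'M[F]_3} := [set <<v>>%MS | v in S].

Definition incident_count (n : 'rV[F]_3) : nat := count (fun v => v *m n^T == 0) S.

Lemma gen_inj_in : {in S &, injective (fun v : 'rV[F]_3 => <<v>>%MS)}.
Proof.
move=> v w /(allP normal_S) norm_v /(allP normal_S) norm_w eq_vw.
apply: normalized_sub_eq norm_v norm_w _.
by rewrite -genmxE eq_vw genmxE.
Qed.

Lemma card_sub_seq (p : pred 'rV[F]_3) : #|[set v in S | p v]| = count p S.
Proof.
rewrite -size_filter; have /card_uniqP <- := filter_uniq p uniq_S.
by apply: eq_card => v; rewrite inE mem_filter andbC.
Qed.

Lemma on_line_points L n : (forall w : 'rV[F]_3, (w <= L)%MS = (w *m n^T == 0)) ->
  on_line points_of L = incident_count n.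
Proof.
move=> eqL; rewrite /on_line /incident_count -card_sub_seq.
have -> : [set P in points_of | (P <= L)%MS] =
          (fun v => <<v>>%MS) @: [set v in S | v *m n^T == 0].
  apply/setP=> P; rewrite inE; apply/andP/imsetP => [[/imsetP[v S_v ->]]|[v]].
    by rewrite genmxE eqL => nv; exists v; rewrite // inE S_v.
  rewrite inE => /andP[S_v nv] ->.
  by split; [apply: imset_f | rewrite genmxE eqL].
rewrite card_in_imset // => v w; rewrite !inE => /andP[S_v _] /andP[S_w _].
exact: gen_inj_in.
Qed.

Lemma arc_of_coordinates (r : nat) :
  (forall n, normalized n -> (incident_count n <= r)%N) ->
  (exists2 n, normalized n & incident_count n = r) ->
  is_arc (size S) r points_of.
Proof.
move=> le_r [n0 norm_n0 eq_r]; split.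
- move=> _ /imsetP[v S_v ->]; apply: pg_point_gen; apply: normalized_neq0.
  exact: (allP normal_S).
- by rewrite card_in_imset; [apply/card_uniqP | apply: gen_inj_in].
- by move=> L /line_equation[n norm_n eqL]; rewrite (on_line_points eqL) le_r.
- exists <<kermx n0^T>>%MS; first by rewrite pg_line_kermx ?normalized_neq0.
  by rewrite (on_line_points (@sub_kermx_line _ n0)).
Qed.

End ArcFromCoordinates.

Lemma arc_le_m_r (F : finFieldType) (n r : nat) (B : {set 'M[F]_3}) :
  is_arc n r B -> (n <= m_r F r)%N.
Proof.
case=> points_B <- lines_B [L line_L on_L]; apply: leq_bigmax_cond.
apply/and3P; split; first by apply/forall_inP.
  by apply/forallP => L'; apply/implyP/lines_B.
by apply/existsP; exists L; rewrite line_L on_L eqxx.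
Qed.

Lemma mx11_eq0 (R : nzRingType) (M : 'M[R]_1) : (M == 0) = (M 0 0 == 0).
Proof.
apply/eqP/eqP => [-> | M00]; first by rewrite mxE.
by apply/matrixP => i j; rewrite !ord1 mxE M00.
Qed.

Inductive gf3 := Z0 | Z1 | Z2.

Definition gf3_eqb (x y : gf3) : bool :=
  match x, y with Z0, Z0 | Z1, Z1 | Z2, Z2 => true | _, _ => false end.
Lemma gf3_eqP : Equality.axiom gf3_eqb. Proof. by case; case; constructor. Qed.
HB.instance Definition _ := hasDecEq.Build gf3 gf3_eqP.

Definition nat_of_gf3 (x : gf3) : nat :=
  match x with Z0 => 0 | Z1 => 1 | Z2 => 2 end.

Definition add3 (x y : gf3) : gf3 :=
  match x, y with
  | Z0, _ => y | _, Z0 => x | Z1, Z1 => Z2 | Z2, Z2 => Z1 | _, _ => Z0 end.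
Definition mul3 (x y : gf3) : gf3 :=
  match x, y with
  | Z0, _ => Z0 | _, Z0 => Z0 | Z1, _ => y | _, Z1 => x | Z2, Z2 => Z1 end.

(* GF(27) = F_3[t]/(t^3 - t - 1); (x0, x1, x2) stands for x0 + x1 t + x2 t^2,
   and the product reduces t^3 = t + 1 and t^4 = t^2 + t. *)
Definition gf27 := (gf3 * gf3 * gf3)%type.
Definition zero27 : gf27 := (Z0, Z0, Z0).
Definition one27 : gf27 := (Z1, Z0, Z0).
Definition add27 (x y : gf27) : gf27 :=
  (add3 x.1.1 y.1.1, add3 x.1.2 y.1.2, add3 x.2 y.2).
Definition mul27 (x y : gf27) : gf27 :=
  let: (x0, x1, x2) := x in let: (y0, y1, y2) := y in
  let p0 := mul3 x0 y0 in
  let p1 := add3 (mul3 x0 y1) (mul3 x1 y0) in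
  let p2 := add3 (add3 (mul3 x0 y2) (mul3 x1 y1)) (mul3 x2 y0) in
  let p3 := add3 (mul3 x1 y2) (mul3 x2 y1) in
  let p4 := mul3 x2 y2 in
  (add3 p0 p3, add3 (add3 p1 p3) p4, add3 p2 p4).
Definition opp27 (x : gf27) : gf27 := mul27 (Z2, Z0, Z0) x.

Definition elements3 : seq gf3 := [:: Z0; Z1; Z2].
Definition elements27 : seq gf27 :=
  [seq (xy, z) | xy <- [seq (x, y) | x <- elements3, y <- elements3], z <- elements3].

Lemma mem_elements27 x : x \in elements27.
Proof. by case: x => [[x0 x1] x2]; case: x0; case: x1; case: x2. Qed.

Definition vec27 := (gf27 * gf27 * gf27)%type.

Definition dot27 (u v : vec27) : gf27 :=
  add27 (add27 (mul27 u.1.1 v.1.1) (mul27 u.1.2 v.1.2)) (mul27 u.2 v.2).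

Definition normalized27 (v : vec27) : bool :=
  let: (x, y, z) := v in
  [|| x == one27, (x == zero27) && (y == one27)
    | [&& x == zero27, y == zero27 & z == one27]].

Definition normal_forms : seq vec27 :=
  [seq v <- [seq (xy, z) | xy <- [seq (x, y) | x <- elements27, y <- elements27],
                          z <- elements27] | normalized27 v].

Lemma mem_normal_forms v : (v \in normal_forms) = normalized27 v.
Proof.
rewrite mem_filter andb_idr // => _; case: v => [[x y] z].
by rewrite (allpairs_f (fun xy z => (xy, z))) ?(allpairs_f pair) ?mem_elements27.
Qed.

(* The arc is given by coordinate triples of integers in [0, 27), where
   n = n0 + 3 n1 + 9 n2 encodes n0 + n1 t + n2 t^2. *)
Definition decode3 (n : nat) : gf3 := match n with 0 => Z0 | 1 => Z1 | _ => Z2 end.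
Definition decode27 (n : nat) : gf27 :=
  (decode3 (n %% 3), decode3 (n %/ 3 %% 3), decode3 (n %/ 9)).
Definition decode (t : nat * nat * nat) : vec27 :=
  (decode27 t.1.1, decode27 t.1.2, decode27 t.2).

Definition arc_codes : seq (nat * nat * nat) := [::
  (0,0,1); (0,1,1); (0,1,2); (0,1,3); (0,1,4); (0,1,5); (0,1,18); (0,1,23); (0,1,26); (1,0,0);
  (1,0,1); (1,0,9); (1,0,11); (1,0,12); (1,0,13); (1,0,15); (1,0,16); (1,1,0); (1,1,1); (1,1,6);
  (1,1,7); (1,1,8); (1,1,9); (1,1,13); (1,1,16); (1,2,0); (1,2,1); (1,3,5); (1,3,10); (1,3,15);
  (1,3,19); (1,3,20); (1,3,23); (1,3,25); (1,3,26); (1,4,3); (1,4,12); (1,4,17); (1,4,18); (1,4,20);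
  (1,4,21); (1,4,22); (1,4,26); (1,5,4); (1,5,11); (1,5,14); (1,5,18); (1,5,22); (1,5,23); (1,5,24);
  (1,5,25); (1,6,3); (1,6,6); (1,6,11); (1,6,14); (1,6,15); (1,6,20); (1,6,25); (1,6,26); (1,7,5);
  (1,7,7); (1,7,11); (1,7,12); (1,7,17); (1,7,22); (1,7,23); (1,7,25); (1,8,4); (1,8,8); (1,8,10);
  (1,8,12); (1,8,15); (1,8,18); (1,8,20); (1,8,22); (1,9,1); (1,9,3); (1,9,13); (1,9,19); (1,9,22);
  (1,10,1); (1,10,4); (1,10,8); (1,10,12); (1,10,14); (1,10,16); (1,10,17); (1,10,20); (1,11,5); (1,11,6);
  (1,11,7); (1,11,11); (1,11,13); (1,11,17); (1,11,20); (1,11,23); (1,12,4); (1,12,7); (1,12,8); (1,12,10);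
  (1,12,12); (1,12,16); (1,12,18); (1,12,25); (1,13,1); (1,13,5); (1,13,16); (1,13,20); (1,13,24); (1,14,1);
  (1,14,3); (1,14,6); (1,14,9); (1,14,10); (1,14,15); (1,14,17); (1,14,25); (1,15,3); (1,15,6); (1,15,8);
  (1,15,9); (1,15,14); (1,15,15); (1,15,22); (1,15,26); (1,16,1); (1,16,4); (1,16,9); (1,16,21); (1,16,25);
  (1,17,1); (1,17,5); (1,17,7); (1,17,10); (1,17,11); (1,17,13); (1,17,14); (1,17,22); (1,18,4); (1,18,6);
  (1,18,8); (1,18,13); (1,18,16); (1,18,22); (1,18,23); (1,18,25); (1,19,4); (1,19,5); (1,19,7); (1,19,8);
  (1,19,13); (1,19,16); (1,19,23); (1,19,24); (1,20,5); (1,20,17); (1,20,19); (1,20,21); (1,20,24); (1,21,3);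
  (1,21,5); (1,21,6); (1,21,7); (1,21,9); (1,21,13); (1,21,19); (1,21,26); (1,22,3); (1,22,14); (1,22,19);
  (1,22,21); (1,22,24); (1,23,5); (1,23,7); (1,23,8); (1,23,9); (1,23,13); (1,23,20); (1,23,25); (1,23,26);
  (1,24,3); (1,24,4); (1,24,6); (1,24,8); (1,24,9); (1,24,16); (1,24,18); (1,24,21); (1,25,4); (1,25,10);
  (1,25,19); (1,25,21); (1,25,24); (1,26,3); (1,26,6); (1,26,7); (1,26,9); (1,26,16); (1,26,18); (1,26,20);
  (1,26,22)].
Definition arc_points : seq vec27 := map decode arc_codes.
Definition witness_line : vec27 := decode (0, 1, 0)%N.

Definition incidences27 (c : vec27) : nat := count (fun v => dot27 v c == zero27) arc_points.

Lemma size_arc_points : size arc_points = 201%N. Proof. by []. Qed.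
Lemma uniq_arc_points : uniq arc_points. Proof. by vm_compute. Qed.
Lemma arc_points_normalized : all normalized27 arc_points. Proof. by vm_compute. Qed.
Lemma incidences_le9 : all (fun c => incidences27 c <= 9)%N normal_forms.
Proof. by vm_compute. Qed.
Lemma witness_line_normalized : normalized27 witness_line. Proof. by vm_compute. Qed.
Lemma incidences_witness : incidences27 witness_line = 9%N. Proof. by vm_compute. Qed.

Lemma gf27_has_inverses :
  all (fun x => (x == zero27) || has (fun y => mul27 x y == one27) elements27) elements27.
Proof. by vm_compute. Qed.
Lemma gf27_sub_eq0 :
  all (fun x => all (fun y => (add27 x (opp27 y) == zero27) ==> (x == y)) elements27)
      elements27.
Proof. by vm_compute. Qed.
Lemma uniq_elements27 : uniq elements27. Proof. by vm_compute. Qed.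

Section Embedding.
Variables (F : finFieldType) (a : F).
Hypotheses (card_F : #|F| = 27%N) (a_cubic : a ^+ 3 = a + 1).

Lemma char3 : (3%:R : F) = 0.
Proof. by apply: pcharf0; apply: (@card_finPcharP _ 3 3). Qed.

Lemma natr_mod3 m n : m = n %[mod 3] -> (m%:R : F) = n%:R.
Proof.
by move=> eq_mn; rewrite (divn_eq m 3) (divn_eq n 3) eq_mn !natrD !natrM char3 !mulr0.
Qed.

Definition embed3 (x : gf3) : F := (nat_of_gf3 x)%:R.

Lemma embed3_add x y : embed3 (add3 x y) = embed3 x + embed3 y.
Proof. by case: x; case: y; rewrite -natrD; apply: natr_mod3. Qed.

Lemma embed3_mul x y : embed3 (mul3 x y) = embed3 x * embed3 y.
Proof. by case: x; case: y; rewrite -natrM; apply: natr_mod3. Qed.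

Definition embed (x : gf27) : F :=
  let: (x0, x1, x2) := x in embed3 x0 + embed3 x1 * a + embed3 x2 * a ^+ 2.

Lemma embed_add x y : embed (add27 x y) = embed x + embed y.
Proof. by case: x => [[x0 x1] x2]; case: y => [[y0 y1] y2]; rewrite /= !embed3_add; ring. Qed.

Lemma embed_mul x y : embed (mul27 x y) = embed x * embed y.
Proof.
case: x => [[x0 x1] x2]; case: y => [[y0 y1] y2]; rewrite /= !embed3_add !embed3_mul.
have cubic0 : a ^+ 3 - a - 1 = 0 by rewrite a_cubic; ring.
apply/eqP; rewrite -subr_eq0; apply/eqP.
set u := embed3 x1 * embed3 y2 + embed3 x2 * embed3 y1.
transitivity (- (u + embed3 x2 * embed3 y2 * a) * (a ^+ 3 - a - 1)); first by rewrite /u; ring.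
by rewrite cubic0 mulr0.
Qed.

Lemma embed0 : embed zero27 = 0. Proof. by rewrite /embed /embed3 /=; ring. Qed.
Lemma embed1 : embed one27 = 1. Proof. by rewrite /embed /embed3 /=; ring. Qed.

(* Injectivity and surjectivity follow from the field facts of the model
   and a cardinality argument. *)
Lemma embed_eq0 x : (embed x == 0) = (x == zero27).
Proof.
apply/eqP/eqP => [x0 | ->]; last exact: embed0.
have /orP[/eqP //| /hasP[y _ /eqP xy1]] := allP gf27_has_inverses x (mem_elements27 x).
by move: (embed_mul x y); rewrite xy1 embed1 x0 mul0r => /eqP; rewrite oner_eq0.
Qed.

Lemma embed_opp x : embed (opp27 x) = - embed x.
Proof.
have two : (2%:R : F) = -1 by apply/eqP; rewrite -addr_eq0 -(natrD _ 2 1) char3.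
by rewrite embed_mul /= /embed3 /= two; ring.
Qed.

Lemma embed_inj : injective embed.
Proof.
move=> x y eq_xy; apply/eqP.
have /allP/(_ y (mem_elements27 y))/implyP := allP gf27_sub_eq0 x (mem_elements27 x).
by apply; rewrite -embed_eq0 embed_add embed_opp eq_xy subrr.
Qed.

Lemma embed_surj z : z \in map embed elements27.
Proof.
have uniq_img : uniq (map embed elements27) by rewrite (map_inj_uniq embed_inj) uniq_elements27.
have sub_img : {subset map embed elements27 <= enum F} by move=> y _; rewrite mem_enum.
have size_img : (size (enum F) <= size (map embed elements27))%N.
  by rewrite -cardE card_F size_map.
by have [_ ->] := uniq_min_size uniq_img sub_img size_img; rewrite mem_enum.
Qed.

Definition embed_vec (v : vec27) : 'rV[F]_3 :=
  \row_j [:: embed v.1.1; embed v.1.2; embed v.2]`_j.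

Lemma embed_dot v c : (embed_vec v *m (embed_vec c)^T == 0) = (dot27 v c == zero27).
Proof.
rewrite mx11_eq0 -embed_eq0 /dot27 !embed_add !embed_mul !mxE.
by rewrite !big_ord_recl big_ord0 !mxE addr0 addrA.
Qed.

Lemma normalized_embed v : normalized (embed_vec v) = normalized27 v.
Proof.
by case: v => [[x y] z]; rewrite normalized3 !mxE /= -embed0 -embed1 !(inj_eq embed_inj).
Qed.

Lemma embed_vec_inj : injective embed_vec.
Proof.
move=> [[x y] z] [[x' y'] z'] /rowP eq_v.
have := eq_v 0; have := eq_v 1; have := eq_v 2%:R; rewrite !mxE /=.
by move=> /embed_inj -> /embed_inj -> /embed_inj ->.
Qed.

Lemma embed_vec_surj n : exists v, embed_vec v = n.
Proof.
have /mapP[x _ ex] := embed_surj (n 0 0).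
have /mapP[y _ ey] := embed_surj (n 0 1).
have /mapP[z _ ez] := embed_surj (n 0 2%:R).
exists (x, y, z); apply/rowP => -[[|[|[|//]]] lt_j]; rewrite !mxE /=.
- by rewrite -ex; congr (n 0 _); apply: val_inj.
- by rewrite -ey; congr (n 0 _); apply: val_inj.
- by rewrite -ez; congr (n 0 _); apply: val_inj.
Qed.

End Embedding.

Lemma exists_nonroot (F : finFieldType) (s : {poly F}) :
  s != 0 -> (size s <= #|F|)%N -> exists x, ~~ root s x.
Proof.
move=> nz_s size_s; case: (pickP (fun x => ~~ root s x)) => [x s_x | all_roots].
  by exists x.
have roots_F : all (root s) (enum F).
  by apply/allP => x _; apply/negbNE/negbT/all_roots.
have := max_ring_poly_roots nz_s roots_F.
by rewrite uniq_rootsE enum_uniq -cardE ltnNge size_s => /(_ isT).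
Qed.

(* The cofactor s of degree 24 with t^27 - t = (t^3 - t - 1) s(t) over F_3. *)
Definition cubic_cofactor (F : fieldType) : seq F :=
  [seq n%:R | n <- [:: 0; 1; 2; 1; 0; 2; 2; 1; 1; 1; 0; 1; 0;
                       0; 1; 2; 1; 0; 2; 2; 1; 1; 1; 0; 1]%N].

(* Every field of order 27 contains a root of t^3 - t - 1: otherwise the
   cofactor s would vanish on all 27 elements. *)
Lemma exists_cubic_root (F : finFieldType) : #|F| = 27%N -> exists a : F, a ^+ 3 = a + 1.
Proof.
move=> card_F; set s : {poly F} := Poly (cubic_cofactor F).
have size_s : size s = 25%N by rewrite (PolyK (c := 0)) //= oner_neq0.
have nz_s : s != 0 by rewrite -size_poly_eq0 size_s.
have [x s_x] : exists x, ~~ root s x by apply: exists_nonroot; rewrite ?size_s ?card_F.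
have factor_x : (x ^+ 3 - x - 1) * s.[x] = x ^+ 27 - x - 3%:R *
    (x ^+ 2 + x ^+ 3 + x ^+ 6 + x ^+ 7 + x ^+ 15 + x ^+ 16 + x ^+ 19 + x ^+ 20).
  by rewrite horner_Poly /=; ring.
move: factor_x; rewrite char3 // mul0r subr0 -card_F expf_card subrr.
move/eqP; rewrite mulf_eq0 (negbTE (s_x : s.[x] != 0)) orbF subr_eq0 => /eqP x3.
by exists x; rewrite -x3; ring.
Qed.

Section Arc201.
Variables (F : finFieldType) (a : F).
Hypotheses (card_F : #|F| = 27%N) (a_cubic : a ^+ 3 = a + 1).

Definition arc201 : seq 'rV[F]_3 := map (embed_vec a) arc_points.

Lemma incident_count_embed c :
  incident_count arc201 (embed_vec a c) = incidences27 c.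
Proof. by rewrite /incident_count count_map; apply: eq_count => v; rewrite /= embed_dot. Qed.

Lemma is_arc201 : is_arc 201 9 (points_of arc201).
Proof.
have uniq_arc : uniq arc201.
  by rewrite (map_inj_uniq (embed_vec_inj card_F a_cubic)) uniq_arc_points.
have normal_arc : all normalized arc201.
  by rewrite all_map; apply: sub_all arc_points_normalized => v; rewrite /= normalized_embed.
rewrite -size_arc_points -(size_map (embed_vec a)); apply: arc_of_coordinates => //.
  move=> n; have [c <-] := embed_vec_surj card_F a_cubic n.
  rewrite normalized_embed // incident_count_embed -mem_normal_forms.
  exact: (allP incidences_le9).
exists (embed_vec a witness_line); last by rewrite incident_count_embed incidences_witness.
by rewrite normalized_embed // witness_line_normalized.
Qed.

End Arc201.

Local Close Scope ring_scope.

Theorem mainTheorem13 (F : finFieldType) (hF : #|F| = 27%N) :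
  (exists B : {set 'M[F]_3}, is_arc 201 9 B) /\ (201 <= m_r F 9)%N.
Proof.
have [a a_cubic] := exists_cubic_root hF.
have arc := is_arc201 hF a_cubic.
by split; [exists (points_of (arc201 a)) | apply: arc_le_m_r arc].
Qed.
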